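(* For integers $\ell\ge0$ and $a\in\mathbb{C}$ define the polynomial in $s$ \[ P_{\ell}(s,a)=\begin{cases}\dfrac{2^{\ell+1}}{(2\ell+1)!!}s^{2\ell+1}, & a=0,\\[8pt] \Bigl(-\dfrac{2}{a}\Bigr)^{\ell+1}\displaystyle\sum_{k=0}^{\ell}c^{(\ell)}_k a^{-k}s^{\ell-k}, & a\ne0,\end{cases} \] where $c^{(\ell)}_0=1$ and $c^{(\ell)}_k=\frac{1}{2^k k!}\prod_{j=1-k}^{k}(\ell+j)$ for $1\le k\le\ell$. Then for $s\neq0$, \[ \frac{\partial}{\partial s}\Bigl(\frac{1}{2s}\frac{\partial}{\partial s}\Bigr)^{\ell}\bigl\{e^{-as}P_{\ell}(s,a)\bigr\}=2e^{-as}. \]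
   Context: $(2\ell+1)!!=1\cdot3\cdots(2\ell+1)$. The operator $\bigl(\frac{1}{2s}\frac{\partial}{\partial s}\bigr)^{\ell}$ means $\ell$-fold application of $f\mapsto\frac{1}{2s}f'$. *)

From Stdlib Require Import Reals.
From Coquelicot Require Import Coquelicot.
Open Scope R_scope.

Fixpoint dfact (n : nat) : nat :=
  match n with
  | O => 1%nat
  | S O => 1%nat
  | S (S m) => (n * dfact m)%nat
  end.

Definition cexp (z : C) : C :=
  (exp (Re z) * cos (Im z), exp (Re z) * sin (Im z)).

(** c^{(l)}_k : c_0 = 1, c_k = 1/(2^k k!) * prod_{j=1-k}^{k} (l+j) for k >= 1.
    The product over j = 1-k, ..., k is written as prod_{i=0}^{2k-1} (l + (1-k) + i). *)
Fixpoint prodR (n : nat) (f : nat -> R) : R :=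
  match n with
  | O => 1
  | S m => prodR m f * f m
  end.

Definition coef (l k : nat) : R :=
  match k with
  | O => 1
  | S _ => / (2 ^ k * INR (Factorial.fact k)) *
           prodR (2 * k) (fun i => INR l + (1 - INR k) + INR i)
  end.

Definition P (l : nat) (s : R) (a : C) : C :=
  if Ceq_dec a 0 then
    RtoC (2 ^ (l + 1) / INR (dfact (2 * l + 1)) * s ^ (2 * l + 1))
  else
    (pow_n (- (2 / a)) (l + 1) *
     sum_n (fun k => RtoC (coef l k) * pow_n (/ a) k * RtoC (s ^ (l - k))) l)%C.

Definition DerC (f : R -> C) (s : R) : C :=
  (Derive (fun t => Re (f t)) s, Derive (fun t => Im (f t)) s).

Definition Lop (f : R -> C) : R -> C := fun s => (/ (2 * RtoC s) * DerC f s)%C.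

From Stdlib Require Import Reals Lra Lia.
From Coquelicot Require Import Coquelicot.
Open Scope R_scope.

(* Put Q_l(s) = e^{-as} P_l(s,a).  Then Q_{l+1}' = 2s Q_l and Q_0' = 2 e^{-as}, so the
   operator (1/2s) d/ds maps Q_{l+1} to Q_l on s <> 0; applied l times to Q_l it gives Q_0
   near s, whose derivative is 2 e^{-as}.  Since (e^{-as} p)' = e^{-as} (p' - a p), everything
   reduces to P_{l+1}' - a P_{l+1} = 2s P_l and P_0' - a P_0 = 2.  For a = 0 this is
   (2l+3)!! = (2l+3) (2l+1)!!.  For a <> 0, P_l is (-2/a)^{l+1} times a homogenised reverse
   Bessel polynomial, and the identity becomes the three-term recurrence
   c^{(l+1)}_{k+1} = c^{(l)}_{k+1} + (l+1-k) c^{(l+1)}_k of its coefficients. *)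

Lemma is_derive_Re (F : R -> C) x l :
  is_derive F x l -> is_derive (fun t => Re (F t)) x (Re l).
Proof.
  intros HF.
  apply (filterdiff_ext_lin _ (fun y : R => fst (scal y l))).
  - apply (filterdiff_comp F (fun z : C_R_NormedModule => fst z)); [exact HF|].
    apply filterdiff_linear, (@is_linear_fst R_AbsRing R_NormedModule R_NormedModule).
  - intros y; reflexivity.
Qed.

Lemma is_derive_Im (F : R -> C) x l :
  is_derive F x l -> is_derive (fun t => Im (F t)) x (Im l).
Proof.
  intros HF.
  apply (filterdiff_ext_lin _ (fun y : R => snd (scal y l))).
  - apply (filterdiff_comp F (fun z : C_R_NormedModule => snd z)); [exact HF|].
    apply filterdiff_linear, (@is_linear_snd R_AbsRing R_NormedModule R_NormedModule).
  - intros y; reflexivity.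
Qed.

Lemma is_derive_Re_Im (F : R -> C) x l :
  is_derive (fun t => Re (F t)) x (Re l) -> is_derive (fun t => Im (F t)) x (Im l) ->
  is_derive F x l.
Proof.
  intros Hre Him.
  apply (filterdiff_ext_lin _ (fun y : R => (scal y (Re l), scal y (Im l)) : C)).
  - apply (filterdiff_ext (fun t => (Re (F t), Im (F t)) : C)); [intros t; now destruct (F t)|].
    apply (filterdiff_comp'_2 _ _ (fun u v => (u, v) : C) x _ _ (fun u v => (u, v) : C) Hre Him).
    apply filterdiff_linear; split.
    + reflexivity.
    + reflexivity.
    + exists 1; split; [lra|]; intros z; rewrite Rmult_1_l; apply Rle_refl.
  - intros y; destruct l; reflexivity.
Qed.

Lemma is_derive_Cmult (F G : R -> C) x f g :
  is_derive F x f -> is_derive G x g ->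
  is_derive (fun t => F t * G t)%C x (f * G x + F x * g)%C.
Proof.
  intros HF HG.
  pose proof (is_derive_Re _ _ _ HF) as F1; pose proof (is_derive_Im _ _ _ HF) as F2.
  pose proof (is_derive_Re _ _ _ HG) as G1; pose proof (is_derive_Im _ _ _ HG) as G2.
  apply is_derive_Re_Im.
  - replace (Re (f * G x + F x * g)%C)
      with (Re f * Re (G x) + Re (F x) * Re g - (Im f * Im (G x) + Im (F x) * Im g))
      by (unfold Re, Im; simpl; ring).
    apply (is_derive_minus (fun t => Re (F t) * Re (G t)) (fun t => Im (F t) * Im (G t))).
    + apply (is_derive_mult (K := R_AbsRing) (fun t => Re (F t)) (fun t => Re (G t))); auto.
      intros; apply Rmult_comm.
    + apply (is_derive_mult (K := R_AbsRing) (fun t => Im (F t)) (fun t => Im (G t))); auto.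
      intros; apply Rmult_comm.
  - replace (Im (f * G x + F x * g)%C)
      with (Re f * Im (G x) + Re (F x) * Im g + (Im f * Re (G x) + Im (F x) * Re g))
      by (unfold Re, Im; simpl; ring).
    apply (is_derive_plus (fun t => Re (F t) * Im (G t)) (fun t => Im (F t) * Re (G t))).
    + apply (is_derive_mult (K := R_AbsRing) (fun t => Re (F t)) (fun t => Im (G t))); auto.
      intros; apply Rmult_comm.
    + apply (is_derive_mult (K := R_AbsRing) (fun t => Im (F t)) (fun t => Re (G t))); auto.
      intros; apply Rmult_comm.
Qed.

Lemma is_derive_Cmult_l (c : C) (F : R -> C) x f :
  is_derive F x f -> is_derive (fun t => c * F t)%C x (c * f)%C.
Proof.
  intros HF; replace (c * f)%C with (0 * F x + c * f)%C by ring.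
  apply (is_derive_Cmult (fun _ => c) F); [|exact HF].
  apply (is_derive_const (K := R_AbsRing) (V := C_R_NormedModule)).
Qed.

Lemma is_derive_RtoC (f : R -> R) x d :
  is_derive f x d -> is_derive (fun t => RtoC (f t)) x (RtoC d).
Proof.
  intros Hf; apply is_derive_Re_Im; simpl; [exact Hf|].
  apply (is_derive_const (K := R_AbsRing) (V := R_NormedModule)).
Qed.

Lemma is_derive_cexp_linear (a : C) x :
  is_derive (fun t => cexp (- (a * RtoC t))) x (- a * cexp (- (a * RtoC x)))%C.
Proof.
  destruct a as [ar ai]; unfold cexp; apply is_derive_Re_Im; simpl;
    auto_derive; auto; unfold Rminus; ring.
Qed.

Lemma DerC_is_derive (F : R -> C) x l : is_derive F x l -> DerC F x = l.
Proof.
  intros HF; apply injective_projections; apply is_derive_unique;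
    [exact (is_derive_Re _ _ _ HF) | exact (is_derive_Im _ _ _ HF)].
Qed.

Lemma DerC_ext_loc (F G : R -> C) t :
  locally t (fun u => F u = G u) -> DerC F t = DerC G t.
Proof.
  intros H; unfold DerC; f_equal; apply Derive_ext_loc;
    apply (filter_imp _ _ (fun u Hu => f_equal _ Hu) H).
Qed.

Lemma is_derive_cexp_mult (a : C) (p : R -> C) x g :
  is_derive p x (a * p x + g)%C ->
  is_derive (fun t => cexp (- (a * RtoC t)) * p t)%C x (cexp (- (a * RtoC x)) * g)%C.
Proof.
  intros Hp.
  replace (cexp (- (a * RtoC x)) * g)%C
    with (- a * cexp (- (a * RtoC x)) * p x + cexp (- (a * RtoC x)) * (a * p x + g))%C
    by ring.
  exact (is_derive_Cmult _ _ _ _ _ (is_derive_cexp_linear a x) Hp).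
Qed.

Lemma Lop_is_derive (F G : R -> C) t :
  t <> 0 -> is_derive F t (2 * RtoC t * G t)%C -> Lop F t = G t.
Proof.
  intros Ht HF; unfold Lop; rewrite (DerC_is_derive _ _ _ HF).
  field; intros E; apply Ht; now injection E.
Qed.

Lemma iter_Lop_tower (F : nat -> R -> C) :
  (forall m t, t <> 0 -> Lop (F (S m)) t = F m t) ->
  forall n m t, t <> 0 -> Nat.iter n Lop (F (m + n)%nat) t = F m t.
Proof.
  intros HF n; induction n as [|n IH]; intros m t Ht; [now rewrite Nat.add_0_r|].
  rewrite <- HF, Nat.add_succ_r by exact Ht; simpl Nat.iter; unfold Lop.
  rewrite (DerC_ext_loc _ (F (S m))); [reflexivity|].
  exact (filter_imp _ _ (fun u => IH (S m) u) (open_neq 0 t Ht)).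
Qed.

Definition rising (x : R) (n : nat) : R := prodR n (fun i => x + INR i).

Lemma rising_succ_l x n : rising x (S n) = x * rising (x + 1) n.
Proof.
  revert x; induction n as [|n IH]; intros x.
  - unfold rising; simpl; ring.
  - change (rising x (S (S n))) with (rising x (S n) * (x + INR (S n))).
    change (rising (x + 1) (S n)) with (rising (x + 1) n * (x + 1 + INR n)).
    rewrite IH, S_INR; ring.
Qed.

Lemma rising_pascal x k :
  rising x (2 * S k) = rising (x - 1) (2 * S k) + 2 * INR (S k) * x * rising (x + 1) (2 * k).
Proof.
  replace (2 * S k)%nat with (S (S (2 * k))) by lia.
  rewrite (rising_succ_l x), (rising_succ_l (x - 1)); replace (x - 1 + 1) with x by ring.
  rewrite (rising_succ_l x (2 * k)).
  change (rising (x + 1) (S (2 * k))) with (rising (x + 1) (2 * k) * (x + 1 + INR (2 * k))).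
  rewrite S_INR, mult_INR; simpl (INR 2); ring.
Qed.

Lemma coef_rising l k :
  coef l k = rising (INR l + (1 - INR k)) (2 * k) / (2 ^ k * INR (Factorial.fact k)).
Proof. destruct k; unfold coef, rising; [simpl; field | apply Rmult_comm]. Qed.

Lemma coef_succ_self l : coef l (S l) = 0.
Proof.
  rewrite coef_rising; replace (2 * S l)%nat with (S (2 * l + 1)) by lia.
  rewrite rising_succ_l, S_INR; unfold Rdiv; ring.
Qed.

Lemma coef_succ l k : (k <= l)%nat ->
  coef (S l) (S k) = coef l (S k) + INR (S l - k) * coef (S l) k.
Proof.
  intros Hk; rewrite !coef_rising.
  set (x := INR (S l - k)).
  assert (Hx : x = INR l + 1 - INR k) by (unfold x; rewrite minus_INR, S_INR by lia; ring).
  replace (INR (S l) + (1 - INR (S k))) with x by (rewrite Hx, !S_INR; ring).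
  replace (INR l + (1 - INR (S k))) with (x - 1) by (rewrite Hx, !S_INR; ring).
  replace (INR (S l) + (1 - INR k)) with (x + 1) by (rewrite Hx, !S_INR; ring).
  rewrite rising_pascal; change (Factorial.fact (S k)) with (S k * Factorial.fact k)%nat.
  rewrite mult_INR; simpl pow.
  pose proof (INR_fact_neq_0 k); pose proof (pow_nonzero 2 k ltac:(lra)).
  pose proof (not_0_INR (S k) ltac:(lia)).
  field; repeat split; assumption.
Qed.

Lemma coef_succ_monomial l k t : (k <= l)%nat ->
  coef (S l) (S k) * t ^ (l - k)
  = t * (coef l (S k) * t ^ (l - S k)) + coef (S l) k * (INR (S l - k) * t ^ Nat.pred (S l - k)).
Proof.
  intros Hk; rewrite coef_succ by exact Hk.
  replace (Nat.pred (S l - k)) with (l - k)%nat by lia.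
  destruct (Nat.eq_dec k l) as [->|Hne].
  - rewrite coef_succ_self; ring.
  - replace (l - k)%nat with (S (l - S k)) by lia; simpl pow; ring.
Qed.

Lemma sum_n_succ_l {G : AbelianMonoid} (f : nat -> G) n :
  sum_n f (S n) = plus (f 0%nat) (sum_n (fun k => f (S k)) n).
Proof.
  induction n as [|n IH].
  - now rewrite sum_Sn, !sum_O.
  - now rewrite sum_Sn, IH, sum_Sn, plus_assoc.
Qed.

(* Coquelicot's [sum_n] and [pow_n] are typed in its algebraic hierarchy; [ring] and [field]
   only accept the equation once it is restated at type [C] with [Cplus]. *)
Ltac C_equation :=
  match goal with |- ?x = ?y => change (@eq C x y) end;
  repeat change (plus ?x ?y) with (x + y)%C.

Lemma sum_n_linear_comb (c d : C) (u v : nat -> C) n :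
  sum_n (fun k => c * u k + d * v k)%C n = (c * sum_n u n + d * sum_n v n)%C.
Proof.
  induction n as [|n IH].
  - now rewrite !sum_O.
  - rewrite !sum_Sn, IH; C_equation; ring.
Qed.

(* [bessel al l t = al^l theta_l(t / al)] with theta_l the reverse Bessel polynomial. *)
Definition bessel (al : C) (l : nat) (t : R) : C :=
  sum_n (fun k => pow_n al k * RtoC (coef l k * t ^ (l - k)))%C l.

Definition bessel_deriv (al : C) (l : nat) (t : R) : C :=
  sum_n (fun k => pow_n al k * RtoC (coef l k * (INR (l - k) * t ^ Nat.pred (l - k))))%C l.

Lemma is_derive_monomial (c : R) (n : nat) x :
  is_derive (fun t => c * t ^ n) x (c * (INR n * x ^ Nat.pred n)).
Proof. auto_derive; [exact I | ring]. Qed.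

Lemma is_derive_bessel al l x : is_derive (bessel al l) x (bessel_deriv al l x).
Proof.
  apply (is_derive_sum_n (fun k t => pow_n al k * RtoC (coef l k * t ^ (l - k)))%C); intros k _.
  apply is_derive_Cmult_l, is_derive_RtoC, is_derive_monomial.
Qed.

Lemma bessel_succ al l t :
  bessel al (S l) t = (RtoC t * bessel al l t + al * bessel_deriv al (S l) t)%C.
Proof.
  set (A k := (pow_n al k * RtoC (coef l k * t ^ (l - k)))%C).
  set (D k := (pow_n al k * RtoC (coef (S l) k * (INR (S l - k) * t ^ Nat.pred (S l - k))))%C).
  assert (HA : bessel al l t = sum_n A (S l)).
  { rewrite sum_Sn; unfold A at 2; rewrite coef_succ_self, Rmult_0_l, Cmult_0_r.
    symmetry; exact (plus_zero_r _). }
  assert (HD : bessel_deriv al (S l) t = sum_n D l).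
  { unfold bessel_deriv; rewrite sum_Sn, Nat.sub_diag, Rmult_0_l, Rmult_0_r, Cmult_0_r.
    exact (plus_zero_r _). }
  assert (HB : forall k, (k <= l)%nat ->
    (pow_n al (S k) * RtoC (coef (S l) (S k) * t ^ (S l - S k)))%C = (t * A (S k) + al * D k)%C).
  { intros k Hk; unfold A, D; simpl (S l - S k)%nat; rewrite coef_succ_monomial by exact Hk.
    change (pow_n al (S k)) with (al * pow_n al k)%C; rewrite RtoC_plus, !RtoC_mult; ring. }
  rewrite HA, HD; unfold bessel.
  rewrite !sum_n_succ_l, (sum_n_ext_loc _ _ l HB).
  assert (H0 : (pow_n al 0 * RtoC (coef (S l) 0 * t ^ (S l - 0)))%C = (t * A 0%nat)%C).
  { unfold A; rewrite !Nat.sub_0_r; change (t ^ S l) with (t * t ^ l).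
    rewrite !RtoC_mult; change (coef _ 0) with 1; C_equation; ring. }
  rewrite H0, sum_n_linear_comb; C_equation; ring.
Qed.

Lemma P_nonzero (l : nat) (t : R) (a : C) :
  a <> 0 -> P l t a = (pow_n (- (2 / a)) (l + 1) * bessel (/ a) l t)%C.
Proof.
  intros Ha; unfold P; destruct (Ceq_dec a 0) as [E|_]; [contradiction|].
  f_equal; apply sum_n_ext; intros k; rewrite RtoC_mult; C_equation; ring.
Qed.

Lemma P_zero (l : nat) (t : R) :
  P l t 0 = RtoC (2 ^ (l + 1) / INR (dfact (2 * l + 1)) * t ^ (2 * l + 1)).
Proof. unfold P; destruct (Ceq_dec 0 0) as [_|E]; [reflexivity | now contradiction E]. Qed.

Lemma dfact_pos n : (0 < dfact n)%nat.
Proof.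
  enough (H : (0 < dfact n)%nat /\ (0 < dfact (S n))%nat) by apply H.
  induction n as [|n [IH1 IH2]]; [simpl; lia|].
  split; [exact IH2 | change (dfact (S (S n))) with (S (S n) * dfact n)%nat; lia].
Qed.

Lemma is_derive_P_succ_zero (l : nat) (x : R) :
  is_derive (fun t => P (S l) t 0) x (2 * x * P l x 0)%C.
Proof.
  apply (is_derive_ext
    (fun t => RtoC (2 ^ (S l + 1) / INR (dfact (2 * S l + 1)) * t ^ (2 * S l + 1)))).
  { intros t; symmetry; apply P_zero. }
  replace (2 * x * P l x 0)%C
    with (RtoC (2 ^ (S l + 1) / INR (dfact (2 * S l + 1)) *
                (INR (2 * S l + 1) * x ^ Nat.pred (2 * S l + 1)))).
  { apply is_derive_RtoC, is_derive_monomial. }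
  rewrite P_zero, <- !RtoC_mult; f_equal.
  replace (2 * S l + 1)%nat with (S (S (2 * l + 1))) by lia.
  change (dfact (S (S ?n))) with (S (S n) * dfact n)%nat; simpl Nat.pred.
  replace (S l + 1)%nat with (S (l + 1)) by lia.
  pose proof (dfact_pos (2 * l + 1)); rewrite mult_INR; simpl pow.
  field; split; apply not_0_INR; lia.
Qed.

Lemma is_derive_P_succ_nonzero (l : nat) (a : C) (x : R) : a <> 0 ->
  is_derive (fun t => P (S l) t a) x (a * P (S l) x a + 2 * x * P l x a)%C.
Proof.
  intros Ha.
  apply (is_derive_ext (fun t => pow_n (- (2 / a)) (S l + 1) * bessel (/ a) (S l) t)%C).
  { intros t; symmetry; apply P_nonzero, Ha. }
  replace (a * P (S l) x a + 2 * x * P l x a)%C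
    with (pow_n (- (2 / a)) (S l + 1) * bessel_deriv (/ a) (S l) x)%C.
  { apply is_derive_Cmult_l, is_derive_bessel. }
  rewrite !P_nonzero, bessel_succ by exact Ha.
  replace (S l + 1)%nat with (S (l + 1)) by lia.
  change (pow_n (- (2 / a))%C (S (l + 1)))
    with (- (2 / a) * pow_n (- (2 / a))%C (l + 1))%C.
  C_equation; field; exact Ha.
Qed.

Lemma is_derive_P_succ (l : nat) (a : C) (x : R) :
  is_derive (fun t => P (S l) t a) x (a * P (S l) x a + 2 * x * P l x a)%C.
Proof.
  destruct (Ceq_dec a 0) as [->|Ha].
  - rewrite Cmult_0_l, Cplus_0_l; apply is_derive_P_succ_zero.
  - now apply is_derive_P_succ_nonzero.
Qed.

Lemma P_0_nonzero (t : R) (a : C) : a <> 0 -> P 0 t a = (- (2 / a))%C.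
Proof.
  intros Ha; rewrite P_nonzero by exact Ha; unfold bessel; rewrite sum_O.
  change (coef 0 0) with 1; simpl; rewrite Rmult_1_l.
  change (@one C_Ring) with (RtoC 1); change (@mult C_Ring ?x ?y) with (x * y)%C; ring.
Qed.

Lemma is_derive_P_0 (a : C) (x : R) : is_derive (fun t => P 0 t a) x (a * P 0 x a + 2)%C.
Proof.
  destruct (Ceq_dec a 0) as [->|Ha].
  - apply (is_derive_ext (fun t => RtoC (2 * t))).
    { intros t; rewrite P_zero; f_equal; simpl; field. }
    rewrite Cmult_0_l, Cplus_0_l; apply is_derive_RtoC; auto_derive; [exact I | ring].
  - apply (is_derive_ext (fun _ : R => (- (2 / a))%C)).
    { intros t; symmetry; apply P_0_nonzero, Ha. }
    replace (a * P 0 x a + 2)%C with (RtoC 0).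
    { apply (is_derive_const (K := R_AbsRing) (V := C_R_NormedModule)). }
    rewrite P_0_nonzero by exact Ha; field; exact Ha.
Qed.

Theorem mainTheorem7 (l : nat) (a : C) (s : R) :
  s <> 0 ->
  is_derive (Nat.iter l Lop (fun t : R => (cexp (- (a * RtoC t)) * P l t a)%C)) s
            (2 * cexp (- (a * RtoC s)))%C.
Proof.
  intros Hs.
  set (F m t := (cexp (- (a * RtoC t)) * P m t a)%C).
  assert (HF : forall m t, t <> 0 -> Lop (F (S m)) t = F m t).
  { intros m t Ht; apply Lop_is_derive; [exact Ht|].
    replace (2 * RtoC t * F m t)%C with (cexp (- (a * RtoC t)) * (2 * t * P m t a))%C
      by (unfold F; ring).
    apply is_derive_cexp_mult, is_derive_P_succ. }
  apply (is_derive_ext_loc (F 0%nat)).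
  - exact (filter_imp _ _ (fun t Ht => eq_sym (iter_Lop_tower F HF l 0 t Ht))
                       (open_neq 0 s Hs)).
  - rewrite Cmult_comm; apply is_derive_cexp_mult, is_derive_P_0.
Qed.
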